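(* Let $\mathbf{f}^{(1)},\mathbf{f}^{(2)}:\mathbb{R}^d\to\mathbb{R}^d$ be Lipschitz with constants $L_1,L_2>0$, with $\sup_{\mathbf{x}\in\mathbb{R}^d}\|\mathbf{f}^{(1)}(\mathbf{x})-\mathbf{f}^{(2)}(\mathbf{x})\|\le\mu$. Let $J\ge2$, $T_2>0$, $\Delta=T_2/(J-1)$, $t_j=(j-1)\Delta$, and let $0<T_1\le\breve t<T_2$ with $\breve t=t_m$ a grid point and $|\breve t-T_1|\le\eta$ ($\mu,\eta>0$). Let $\mathbf{x}(t)$ solve the switched system with initial state $\mathbf{x}_0$. Let $\widehat{\mathbf{y}}(t_1)=\mathbf{x}_0$, $\widehat{\mathbf{y}}(t_j)=\mathcal{N}_j(\widehat{\mathbf{y}}(t_{j-1}))$ for $j=2,\dots,J$, where the maps $\mathcal{N}_j:\mathbb{R}^d\to\mathbb{R}^d$ satisfy, for some $\varepsilon\ge0$ and all $j=2,\dots,J$, $\|\mathcal{N}_j(\widehat{\mathbf{y}}(t_{j-1}))-\Phi^{(k_j)}_\Delta(\widehat{\mathbf{y}}(t_{j-1}))\|\le\varepsilon$ with $k_j=1$ if $t_j\le\breve t$ and $k_j=2$ if $t_j>\breve t$. Then for $j=2,\dots,J$, $$\|\widehat{\mathbf{y}}(t_j)-\mathbf{x}(t_j)\|\le\begin{cases}\dfrac{1-\exp(L_1t_j)}{1-\exp(L_1\Delta)}\varepsilon, & t_j\in(0,T_1],\\[2mm] \mu(t_j-T_1)\exp\big(\max(L_1,L_2)(t_j-T_1)\big)+\dfrac{1-\exp(L_1t_j)}{1-\exp(L_1\Delta)}\varepsilon,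 & t_j\in(T_1,\breve t],\\[2mm] \mu\eta\exp\big(L_2(t_j-\breve t)+\max(L_1,L_2)\eta\big)+\dfrac{1-\exp(L_2(t_j-\breve t))}{1-\exp(L_2\Delta)}\varepsilon+\exp\big(L_2(t_j-\breve t)\big)\dfrac{1-\exp(L_1\breve t)}{1-\exp(L_1\Delta)}\varepsilon, & t_j\in(\breve t,T_2].\end{cases}$$
   Context: $\|\cdot\|$ is the Euclidean norm. The switched system is $\frac{d}{dt}\mathbf{x}(t)=\mathbf{f}^{(\sigma(t))}(\mathbf{x}(t))$, $\mathbf{x}(0)=\mathbf{x}_0$, with $\sigma(t)=1$ for $t\in(0,T_1]$ and $\sigma(t)=2$ for $t\in(T_1,T_2]$; $T_1$ is the (unknown) switching time and $\breve t$ is its approximation identified by the paper's adaptive algorithm. For $k=1,2$, $\Phi^{(k)}_\Delta(\mathbf{z})$ denotes the state at time $\Delta$ of the solution of $\frac{d}{dt}\mathbf{z}=\mathbf{f}^{(k)}(\mathbf{z})$ started at $\mathbf{z}$ (the $\Delta$-lag flow map). The maps $\mathcal{N}_j$ are the trained local neural networks used to predict one time step; the accuracy hypothesis encodes that networks used for steps up to $\breve t$ approximate $\Phi^{(1)}_\Delta$ and those after approximate $\Phi^{(2)}_\Delta$ within $\varepsilon$ at the predicted states. *)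

From HB Require Import structures.
From mathcomp Require Import all_boot all_order all_algebra.
From mathcomp Require Import all_classical all_reals all_analysis.
Set Implicit Arguments. Unset Strict Implicit. Unset Printing Implicit Defensive.
Import Order.TTheory GRing.Theory Num.Theory.
Import numFieldNormedType.Exports.
Local Open Scope classical_set_scope.
Local Open Scope ring_scope.

Notation vec R d := 'rV[R]_d.

Definition enorm {R : realType} {d : nat} (v : vec R d) : R :=
  Num.sqrt (\sum_(i < d) (v ord0 i) ^+ 2).

Definition lipschitz_with {R : realType} {d : nat} (f : vec R d -> vec R d) (L : R) :=
  forall x y : vec R d, enorm (f x - f y) <= L * enorm (x - y).

Definition solves_on {R : realType} {d : nat} (f : vec R d -> vec R d)
    (a b : R) (y : R -> vec R d) : Prop :=
  {within `[a, b], continuous y} /\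
  (forall t : R, a < t < b -> is_derive t (1 : R) y (f (y t))).

Definition is_flow_map {R : realType} {d : nat} (f : vec R d -> vec R d)
    (Delta : R) (Phi : vec R d -> vec R d) : Prop :=
  forall z : vec R d, exists y : R -> vec R d,
    y 0 = z /\ solves_on f 0 Delta y /\ y Delta = Phi z.

Definition switched_solution {R : realType} {d : nat} (f1 f2 : vec R d -> vec R d)
    (T1 T2 : R) (x0 : vec R d) (x : R -> vec R d) : Prop :=
  x 0 = x0 /\ {within `[0, T2], continuous x} /\
  solves_on f1 0 T1 x /\ solves_on f2 T1 T2 x.

Definition tgrid {R : realType} (Delta : R) (j : nat) : R := (j.-1)%:R * Delta.

From HB Require Import structures.
From mathcomp Require Import all_boot all_order all_algebra.
From mathcomp Require Import all_classical all_reals all_analysis.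
From mathcomp Require Import ring lra zify.
Import Order.TTheory GRing.Theory Num.Theory.
Import numFieldNormedType.Exports.
Local Open Scope classical_set_scope.
Local Open Scope ring_scope.

(* The error of the network predictions is propagated step by step.  Over one step of
   length [Delta] the error is amplified by [expR (L Delta)], the Lipschitz constant of the
   exact flow map, and increased by the network error [eps] plus the defect between the flow
   of the active model and the true switched trajectory.  This defect vanishes unless the step
   runs past the switch [T1], where a Gronwall comparison of the two vector fields bounds it by
   [mu / L1 (expR (L1 s) - 1)], [s] being the time spent past [T1].  Solving the resulting
   linear recursions gives geometric sums; after the detected switch [tb] the error reached
   at [tb] is only propagated with the constant [L2].  The Gronwall comparison is proved for
   the smooth quantity [sqrt (|u - v|^2 + dl^2)] and [dl -> 0]. *)

Section EuclideanNorm.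
Context {R : realType} {d : nat}.
Implicit Types v w : vec R d.

Lemma enorm_ge0 v : 0 <= enorm v.
Proof. exact: sqrtr_ge0. Qed.

Lemma sqr_enorm v : enorm v ^+ 2 = \sum_i v ord0 i ^+ 2.
Proof. by rewrite sqr_sqrtr // sumr_ge0 // => i _; rewrite sqr_ge0. Qed.

Lemma enorm0 : enorm (0 : vec R d) = 0.
Proof. by rewrite /enorm big1 ?sqrtr0 // => i _; rewrite mxE expr0n. Qed.

Lemma enorm_eq0 v : (enorm v == 0) = (v == 0).
Proof.
apply/idP/eqP => [|->]; last by rewrite enorm0.
rewrite sqrtr_eq0 => sum_le0.
have sum0 : \sum_i v ord0 i ^+ 2 = 0.
  by apply/eqP; rewrite eq_le sum_le0 sumr_ge0 // => i _; rewrite sqr_ge0.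
apply/matrixP => i j; rewrite (ord1 i) mxE.
have /eqP := psumr_eq0P (fun k _ => sqr_ge0 (v ord0 k)) sum0 (i := j) isT.
by rewrite sqrf_eq0 => /eqP.
Qed.

Lemma enorm_gt0 v : v != 0 -> 0 < enorm v.
Proof. by move=> v0; rewrite lt_def enorm_eq0 v0 enorm_ge0. Qed.

Lemma sum_mul_le_enorm v w : \sum_i v ord0 i * w ord0 i <= enorm v * enorm w.
Proof.
have [->|v0] := eqVneq v 0.
  by rewrite enorm0 mul0r big1 // => i _; rewrite mxE mul0r.
have [->|w0] := eqVneq w 0.
  by rewrite enorm0 mulr0 big1 // => i _; rewrite mxE mulr0.
set S := enorm v; set K := enorm w; set P := \sum_i _.
have SK0 : 0 < K * S by rewrite mulr_gt0 ?enorm_gt0.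
have : 0 <= \sum_i (K * v ord0 i - S * w ord0 i) ^+ 2.
  by rewrite sumr_ge0 // => i _; rewrite sqr_ge0.
have -> : \sum_i (K * v ord0 i - S * w ord0 i) ^+ 2 =
    K ^+ 2 * \sum_i v ord0 i ^+ 2 + S ^+ 2 * \sum_i w ord0 i ^+ 2 - 2 * (K * S) * P.
  rewrite /P !mulr_sumr -big_split -sumrB /=.
  by apply: eq_bigr => i _; ring.
rewrite -!sqr_enorm -/S -/K => sum_ge0.
by rewrite -(ler_pM2l SK0); nra.
Qed.

Lemma enormD v w : enorm (v + w) <= enorm v + enorm w.
Proof.
rewrite -ler_sqr ?nnegrE ?addr_ge0 ?enorm_ge0 // sqrrD !sqr_enorm.
have -> : \sum_i (v + w) ord0 i ^+ 2 = \sum_i v ord0 i ^+ 2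
    + (\sum_i v ord0 i * w ord0 i) *+ 2 + \sum_i w ord0 i ^+ 2.
  by rewrite -sumrMnl -!big_split /=; apply: eq_bigr => i _; rewrite mxE sqrrD.
by rewrite lerD2r lerD2l lerMn2r sum_mul_le_enorm.
Qed.
End EuclideanNorm.

Section Calculus.
Context {R : realType}.

Lemma gronwall_le (g dg : R -> R) (L c h : R) : 0 < L -> 0 <= h ->
  {within `[0, h], continuous g} ->
  (forall t, 0 < t < h -> is_derive t 1 g (dg t)) ->
  (forall t, 0 < t < h -> dg t <= L * g t + c) ->
  g h + c / L <= expR (L * h) * (g 0 + c / L).
Proof.
move=> L0 h0 cg Dg dg_le.
pose E (t : R) := expR (- L * t).
pose phi (t : R) := E t * (g t + c / L).
have DE (t : R) : is_derive t 1 E (- L * E t).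
  apply: (is_derive_eq (is_derive1_comp (is_derive_expR _)
    (is_deriveZ (- L) (is_derive_id t 1)))).
  by rewrite /E /= mulrC; congr (_ * _); rewrite -[RHS]mulr1.
have Dphi (t : R) : 0 < t < h -> is_derive t 1 phi (E t * (dg t - L * g t - c)).
  move=> th; apply: (is_derive_eq (is_deriveM (DE t)
    (is_deriveD (Dg t th) (is_derive_cst (c / L) t 1)))).
  rewrite addr0; change (E t * dg t + (g t + c / L) * (- L * E t) = E t * (dg t - L * g t - c)).
  by field; rewrite gt_eqF.
have cphi : {within `[0, h], continuous phi}.
  have cE : {within `[0, h], continuous E}.
    apply: continuous_subspaceT => t; apply: continuous_comp; last exact: continuous_expR.
    by apply: cvgM; [exact: cvg_cst | exact: cvg_id].
  by move=> t; apply: cvgM; [exact: cE | apply: cvgD; [exact: cg | exact: cvg_cst]].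
have : phi h <= phi 0.
  apply: (@ler0_derive1_le_cc _ phi 0 h _ _ cphi); rewrite ?in_itv /= ?lexx ?h0 //.
  - by move=> t; rewrite in_itv /= => /Dphi Dt; exact: ex_derive.
  - move=> t; rewrite in_itv /= => th; have Dt := Dphi t th; rewrite derive1E derive_val.
    by rewrite pmulr_rle0 ?expR_gt0 // subr_le0 lerBlDr addrC dg_le.
rewrite /phi /E mulr0 expR0 mul1r mulNr expRN => le_phi.
by rewrite -ler_pdivrMl ?expR_gt0 // mulrC.
Qed.

Lemma is_derive_coord {d : nat} (i : 'I_d) {u : R -> vec R d} {t : R} {du : vec R d} :
  is_derive t 1 u du -> is_derive t 1 (fun s => u s ord0 i) (du ord0 i).
Proof.
move=> [Du <-]; have := (derivable_mxP u t 1).1 Du ord0 i.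
by constructor => //; rewrite (derive_mx Du) mxE.
Qed.

Lemma is_derive_shift {V : normedModType R} (f : R -> V) (t a : R) (df : V) :
  is_derive (t + a) 1 f df -> is_derive t 1 (fun s => f (s + a)) df.
Proof.
move=> [Df <-].
have E : (fun h : R => h^-1 *: (((fun s => f (s + a)) \o shift t) (h *: 1) - f (t + a))) =
    (fun h => h^-1 *: ((f \o shift (t + a)) (h *: 1) - f (t + a))).
  by apply/funext => h; rewrite /= addrA.
by constructor; [rewrite /derivable E | rewrite /derive E].
Qed.

Lemma within_continuous_shift {T : topologicalType} (f : R -> T) (A B : set R) (a : R) :
  {within A, continuous f} -> (forall t, B t -> A (t + a)) ->
  {within B, continuous (fun t => f (t + a))}.
Proof.
move=> cf BA; apply/subspace_continuousP => t Bt.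
have cfa := (subspace_continuousP _ _).1 cf (t + a) (BA _ Bt).
apply: cvg_trans _ cfa => P /= AP.
have shift_cvg : (fun s : R => s + a) @ nbhs t --> nbhs (t + a).
  by apply: cvgD; [exact: cvg_id | exact: cvg_cst].
have := shift_cvg _ AP.
change (nbhs t (fun s => A (s + a) -> P (f (s + a))) ->
  nbhs t (fun s => B s -> P (f (s + a)))).
by apply: filterS => s As Bs; exact: As (BA _ Bs).
Qed.

End Calculus.

Section SoftNorm.
Context {R : realType} {d : nat}.

Definition soft_norm (dl : R) (v : vec R d) := Num.sqrt (enorm v ^+ 2 + dl ^+ 2).

Lemma soft_norm_gt0 {dl} v : 0 < dl -> 0 < soft_norm dl v.
Proof. by move=> dl0; rewrite sqrtr_gt0 ltr_wpDl ?sqr_ge0 ?exprn_gt0. Qed.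

Lemma enorm_le_soft_norm dl v : enorm v <= soft_norm dl v.
Proof.
rewrite /soft_norm -[X in X <= _]ger0_norm ?enorm_ge0 // -sqrtr_sqr.
by rewrite ler_sqrt ?addr_ge0 ?sqr_ge0 // lerDl sqr_ge0.
Qed.

Lemma soft_norm_le {dl} v : 0 <= dl -> soft_norm dl v <= enorm v + dl.
Proof.
move=> dl0; rewrite /soft_norm -[X in _ <= X]ger0_norm ?addr_ge0 ?enorm_ge0 //.
rewrite -sqrtr_sqr ler_sqrt ?sqr_ge0 // sqrrD lerD2r lerDl.
by rewrite mulrn_wge0 // mulr_ge0 ?enorm_ge0.
Qed.

Lemma continuous_soft_norm dl : continuous (soft_norm dl).
Proof.
have csq : continuous (fun v : vec R d => enorm v ^+ 2).
  rewrite (_ : (fun v => _) = fun v : vec R d => \sum_i v ord0 i ^+ 2).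
    move=> v; apply: (@cvg_big _ _ +%R 0 xpredT add_continuous _ (nbhs v)) => i _.
    by apply: cvgM; exact: coord_continuous.
  by apply/funext => v; rewrite sqr_enorm.
move=> v; apply: continuous_comp; last exact: sqrt_continuous.
by apply: (@cvgD _ _ _ (nbhs v) _ _ (fun=> dl ^+ 2)); [exact: csq | exact: cvg_cst].
Qed.

Lemma is_derive_soft_norm {dl} {w : R -> vec R d} {t : R} {dw : vec R d} :
  0 < dl -> is_derive t 1 w dw ->
  is_derive t 1 (soft_norm dl \o w)
    ((\sum_i w t ord0 i * dw ord0 i) / soft_norm dl (w t)).
Proof.
move=> dl0 Dw.
have Dsq i : is_derive t 1 (fun s => w s ord0 i ^+ 2) (2 * (w t ord0 i * dw ord0 i)).
  have := is_deriveX 2 (is_derive_coord i Dw); rewrite exprfctE expr1 => D2.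
  by apply: (is_derive_eq D2); rewrite /= mulrA.
have Dsum : is_derive t 1 (fun s => enorm (w s) ^+ 2 + dl ^+ 2)
    (2 * \sum_i w t ord0 i * dw ord0 i).
  rewrite (_ : (fun s => _) = \sum_i (fun s => w s ord0 i ^+ 2) + cst (dl ^+ 2)).
    apply: (is_derive_eq (is_deriveD (is_derive_sum Dsq) (is_derive_cst _ t 1))).
    by rewrite addr0 mulr_sumr.
  by apply/funext => s; rewrite /= sqr_enorm fct_sumE.
apply: (is_derive_eq (is_derive1_comp (is_derive1_sqrt _) Dsum)).
  by rewrite ltr_wpDl ?sqr_ge0 ?exprn_gt0.
have := soft_norm_gt0 (w t) dl0; rewrite /soft_norm => /gt_eqF /negbT sn0.
by field.
Qed.

Lemma soft_norm_slope_le {dl} (v dv : vec R d) : 0 < dl ->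
  (\sum_i v ord0 i * dv ord0 i) / soft_norm dl v <= enorm dv.
Proof.
move=> dl0; rewrite ler_pdivrMr ?soft_norm_gt0 // mulrC.
apply: le_trans (sum_mul_le_enorm v dv) _.
by rewrite ler_wpM2r ?enorm_ge0 ?enorm_le_soft_norm.
Qed.

End SoftNorm.

Section ODEComparison.
Context {R : realType} {d : nat}.
Implicit Types F G : vec R d -> vec R d.

Lemma solution_gap_le F G (L c h : R) (u v : R -> vec R d) :
  0 < L -> 0 <= h ->
  (forall p q, enorm (F p - G q) <= L * enorm (p - q) + c) ->
  {within `[0, h], continuous u} -> {within `[0, h], continuous v} ->
  (forall t, 0 < t < h -> is_derive t 1 u (F (u t))) ->
  (forall t, 0 < t < h -> is_derive t 1 v (G (v t))) ->
  enorm (u h - v h) <= expR (L * h) * enorm (u 0 - v 0) + c / L * (expR (L * h) - 1).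
Proof.
move=> L0 h0 FG cu cv Du Dv; apply/ler_addgt0Pr => e e0.
set K := expR (L * h); have K0 : 0 < K := expR_gt0 _.
(* [soft_norm] is differentiable even where [u = v]; its offset [e / K] grows to [e]. *)
pose dl := e / K; have dl0 : 0 < dl by rewrite divr_gt0.
pose g t := soft_norm dl (u t - v t).
pose dg t := (\sum_i (u t - v t) ord0 i * (F (u t) - G (v t)) ord0 i) / g t.
have gron : g h + c / L <= K * (g 0 + c / L).
  apply: (@gronwall_le _ g dg) => //.
  - change {within `[0, h], continuous (soft_norm dl \o (u - v))}.
    apply: within_continuous_comp; last exact: within_continuousB.
    by move=> w _; exact: continuous_soft_norm.
  - move=> t th; exact: (is_derive_soft_norm dl0 (is_deriveB (Du t th) (Dv t th))).
  - move=> t th; apply: le_trans (soft_norm_slope_le _ _ dl0) _.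
    apply: le_trans (FG _ _) _; rewrite lerD2r ler_pM2l //.
    exact: enorm_le_soft_norm.
have := enorm_le_soft_norm dl (u h - v h).
have := soft_norm_le (u 0 - v 0) (ltW dl0).
have eK : e = K * dl by rewrite /dl mulrC divfK ?gt_eqF.
move: gron; rewrite /g eK; nra.
Qed.

Lemma solves_on_gap_le {F G} {L c h : R} {y z : R -> vec R d} {a b a' b' s s' : R} :
  0 < L -> 0 <= h ->
  (forall p q, enorm (F p - G q) <= L * enorm (p - q) + c) ->
  solves_on F a b y -> solves_on G a' b' z ->
  a <= s -> s + h <= b -> a' <= s' -> s' + h <= b' ->
  enorm (y (s + h) - z (s' + h)) <=
    expR (L * h) * enorm (y s - z s') + c / L * (expR (L * h) - 1).
Proof.
move=> L0 h0 FG [cy Dy] [cz Dz] as_ sb as' sb'.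
have := @solution_gap_le F G L c h (fun t => y (t + s)) (fun t => z (t + s')) L0 h0 FG.
rewrite !add0r ![h + _]addrC; apply.
- apply: (@within_continuous_shift _ _ y `[a, b] _ s cy) => t /=.
  rewrite !in_itv /= => /andP[t0 th].
  by apply/andP; split; lra.
- apply: (@within_continuous_shift _ _ z `[a', b'] _ s' cz) => t /=.
  rewrite !in_itv /= => /andP[t0 th].
  by apply/andP; split; lra.
- move=> t /andP[t0 th]; apply: is_derive_shift; apply: Dy.
  by apply/andP; split; lra.
- move=> t /andP[t0 th]; apply: is_derive_shift; apply: Dz.
  by apply/andP; split; lra.
Qed.

Lemma lipschitz_with_add0 {F} {L : R} : lipschitz_with F L ->
  forall p q, enorm (F p - F q) <= L * enorm (p - q) + 0.
Proof. by move=> lF p q; rewrite addr0; exact: lF. Qed.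

Lemma lipschitz_perturbed {F G} {L mu : R} :
  lipschitz_with F L -> (forall z, enorm (F z - G z) <= mu) ->
  forall p q, enorm (F p - G q) <= L * enorm (p - q) + mu.
Proof.
move=> lF FG p q; have -> : F p - G q = (F p - F q) + (F q - G q) by rewrite addrA subrK.
by apply: le_trans (enormD _ _) _; apply: lerD.
Qed.

Lemma solves_on_unique {F} {L h : R} {y z : R -> vec R d} {a b a' b' s s' : R} :
  0 < L -> 0 <= h -> lipschitz_with F L ->
  solves_on F a b y -> solves_on F a' b' z ->
  a <= s -> s + h <= b -> a' <= s' -> s' + h <= b' ->
  y s = z s' -> y (s + h) = z (s' + h).
Proof.
move=> L0 h0 lF sy sz as_ sb as' sb' yz.
have := solves_on_gap_le L0 h0 (lipschitz_with_add0 lF) sy sz as_ sb as' sb'.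
rewrite yz subrr enorm0 mulr0 !mul0r addr0 => le0.
by apply/eqP; rewrite -subr_eq0 -enorm_eq0 eq_le le0 enorm_ge0.
Qed.

Lemma flow_map_lipschitz {F} {L Dl : R} {Phi} : 0 < L -> 0 <= Dl ->
  lipschitz_with F L -> is_flow_map F Dl Phi -> lipschitz_with Phi (expR (L * Dl)).
Proof.
move=> L0 Dl0 lF flF p q.
have [y [y0 [sy yD]]] := flF p; have [z [z0 [sz zD]]] := flF q.
have Dl_le : 0 + Dl <= Dl by rewrite add0r.
have := solves_on_gap_le L0 Dl0 (lipschitz_with_add0 lF) sy sz (lexx 0) Dl_le (lexx 0) Dl_le.
by rewrite !add0r y0 z0 yD zD mul0r mul0r addr0.
Qed.

Lemma flow_map_on_solution {F} {L Dl a0 b0 a : R} {Phi} {x : R -> vec R d} :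
  0 < L -> 0 <= Dl -> lipschitz_with F L -> is_flow_map F Dl Phi ->
  solves_on F a0 b0 x -> a0 <= a -> a + Dl <= b0 -> Phi (x a) = x (a + Dl).
Proof.
move=> L0 Dl0 lF flF sx a0a aDl.
have [y [y0 [sy <-]]] := flF (x a).
have Dl_le : 0 + Dl <= Dl by rewrite add0r.
have := solves_on_unique L0 Dl0 lF sy sx (lexx 0) Dl_le a0a aDl y0.
by rewrite add0r.
Qed.

End ODEComparison.

Section Algebra.
Context {R : realType}.

(* On the grid, [accum L Dl (n * Dl)] is the geometric sum of [expR (L * Dl) ^+ i], [i < n]. *)
Definition accum (L Dl t : R) := (1 - expR (L * t)) / (1 - expR (L * Dl)).

Lemma accum0 L Dl : accum L Dl 0 = 0.
Proof. by rewrite /accum mulr0 expR0 subrr mul0r. Qed.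

Lemma accumD {L Dl : R} t : 0 < L -> 0 < Dl ->
  1 + expR (L * Dl) * accum L Dl t = accum L Dl (t + Dl).
Proof.
move=> L0 Dl0; have K1 : 1 - expR (L * Dl) != 0.
  by rewrite subr_eq0 eq_sym gt_eqF // expR_gt1 mulr_gt0.
by rewrite /accum mulrDr expRD; field.
Qed.

Lemma expR_drift_le {L L' mu s : R} : 0 < L -> L <= L' -> 0 <= mu -> 0 <= s ->
  mu / L * (expR (L * s) - 1) <= mu * s * expR (L' * s).
Proof.
move=> L0 LL' mu0 s0.
have E0 : 0 < expR (L * s) := expR_gt0 _.
have : 1 - L * s <= (expR (L * s))^-1 by rewrite -expRN expR_ge1Dx.
rewrite -(ler_pM2l E0) mulfV ?gt_eqF // => le_1.
have EE' : expR (L * s) <= expR (L' * s) by rewrite ler_expR ler_wpM2r.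
have Ls0 : 0 <= L * s by rewrite mulr_ge0 // ltW.
have := ler_wpM2r Ls0 EE'.
rewrite -!mulrA ler_wpM2l // mulrC ler_pdivrMr //.
nra.
Qed.

End Algebra.

Section Grid.
Context {R : realType} {Delta : R}.
Hypothesis Delta_gt0 : 0 < Delta.

Lemma tgrid1 : tgrid Delta 1 = 0.
Proof. by rewrite /tgrid mul0r. Qed.

Lemma tgridS k : (0 < k)%N -> tgrid Delta k.+1 = tgrid Delta k + Delta.
Proof. by case: k => // k _; rewrite /tgrid /= mulrSr mulrDl mul1r. Qed.

Lemma tgrid_ge0 k : 0 <= tgrid Delta k.
Proof. by rewrite /tgrid mulr_ge0 // ltW. Qed.

Lemma ler_tgrid i k : (0 < i)%N -> (0 < k)%N ->
  (tgrid Delta i <= tgrid Delta k) = (i <= k)%N.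
Proof. by move=> i0 k0; rewrite /tgrid ler_pM2r // ler_nat; lia. Qed.

Lemma ler_tgrid_nat i k : (i <= k)%N -> tgrid Delta i <= tgrid Delta k.
Proof. by move=> ik; rewrite /tgrid ler_pM2r // ler_nat; lia. Qed.

End Grid.

Lemma le_by_recursion {R : realDomainType} {e B g : nat -> R} {K : R} {m n : nat} :
  0 <= K -> e m <= B m ->
  (forall k, (m <= k < n)%N -> e k.+1 <= K * e k + g k) ->
  (forall k, (m <= k < n)%N -> K * B k + g k <= B k.+1) ->
  forall k, (m <= k <= n)%N -> e k <= B k.
Proof.
move=> K0 em e_rec B_rec; elim=> [|k IH] /andP[mk kn].
  by rewrite leqn0 in mk; rewrite -(eqP mk).
have [<-|km] := eqVneq m k.+1; first by [].
have mkn : (m <= k < n)%N by apply/andP; split; lia.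
apply: le_trans (e_rec k mkn) _; apply: le_trans (B_rec k mkn).
by rewrite lerD2r ler_wpM2l // IH //; apply/andP; split; lia.
Qed.

Section SwitchedFlow.
Context {R : realType} {d : nat}.

Definition past_switch (T1 t : R) := Num.max 0 (t - T1).

Lemma past_switch_le {T1 t : R} : t <= T1 -> past_switch T1 t = 0.
Proof. by move=> tT1; apply/max_idPl; rewrite subr_le0. Qed.

Lemma past_switch_ge {T1 t : R} : T1 <= t -> past_switch T1 t = t - T1.
Proof. by move=> T1t; apply/max_idPr; rewrite subr_ge0. Qed.

Lemma expR_past_switchD (L T1 t Dl : R) : 0 <= Dl ->
  expR (L * Dl) * (expR (L * past_switch T1 t) - 1)
    + (expR (L * (past_switch T1 (t + Dl) - past_switch T1 t)) - 1)
  = expR (L * past_switch T1 (t + Dl)) - 1.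
Proof.
move=> Dl0; have [tT1|T1t] := leP t T1.
  by rewrite (past_switch_le tT1) mulr0 expR0 subrr mulr0 add0r subr0.
have T1tD : T1 <= t + Dl by lra.
rewrite !past_switch_ge ?(ltW T1t) // (_ : t + Dl - T1 - (t - T1) = Dl); last by ring.
by rewrite (_ : L * (t + Dl - T1) = L * Dl + L * (t - T1)) ?expRD; [ring | ring].
Qed.

Lemma switched_flow_defect_le {f1 f2 : vec R d -> vec R d} {L1 mu T1 T2 Dl a : R}
    {Phi1 : vec R d -> vec R d} {x : R -> vec R d} :
  0 < L1 -> 0 <= Dl -> lipschitz_with f1 L1 -> (forall z, enorm (f1 z - f2 z) <= mu) ->
  solves_on f1 0 T1 x -> solves_on f2 T1 T2 x -> is_flow_map f1 Dl Phi1 ->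
  0 <= a -> a + Dl <= T2 ->
  enorm (Phi1 (x a) - x (a + Dl)) <=
    mu / L1 * (expR (L1 * (past_switch T1 (a + Dl) - past_switch T1 a)) - 1).
Proof.
move=> L0 Dl0 lf1 f1f2 sx1 sx2 fl1 a0 aT2.
have [aT1|T1a] := leP (a + Dl) T1.
  rewrite (flow_map_on_solution L0 Dl0 lf1 fl1 sx1 a0 aT1) subrr enorm0.
  rewrite !past_switch_le ?subrr ?mulr0 ?expR0 ?subrr ?mulr0 //; lra.
have [y [y0 [sy yD]]] := fl1 (x a).
(* Up to time [r] (when [x] reaches the switch) the flow of [f1] from [x a] is [x] itself. *)
have [r [r0 rDl T1ar yr ->]] : exists r, [/\ 0 <= r, r <= Dl, T1 <= a + r,
    y r = x (a + r) & past_switch T1 (a + Dl) - past_switch T1 a = Dl - r].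
  have [aT1|T1a'] := leP a T1.
    exists (T1 - a); split; [lra | lra | lra | |].
      have r_le : 0 + (T1 - a) <= Dl by lra.
      have ar_le : a + (T1 - a) <= T1 by lra.
      have := solves_on_unique L0 _ lf1 sy sx1 (lexx 0) r_le a0 ar_le y0.
      by rewrite add0r; apply; rewrite subr_ge0.
    by rewrite past_switch_ge ?past_switch_le //; lra.
  exists 0; split; rewrite ?addr0 //; [lra | by rewrite !past_switch_ge; lra].
have h_le : r + (Dl - r) <= Dl by lra.
have ah_le : a + r + (Dl - r) <= T2 by lra.
have := solves_on_gap_le L0 _ (lipschitz_perturbed lf1 f1f2) sy sx2 r0 h_le T1ar ah_le.
have -> : r + (Dl - r) = Dl by ring.
have -> : a + r + (Dl - r) = a + Dl by ring.
by rewrite yr subrr enorm0 mulr0 add0r yD; apply; rewrite subr_ge0.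
Qed.

Lemma one_step_error_le {Phi : vec R d -> vec R d} {K eps : R} {yp yn : vec R d}
    (xp xn : vec R d) :
  lipschitz_with Phi K -> enorm (yn - Phi yp) <= eps ->
  enorm (yn - xn) <= eps + K * enorm (yp - xp) + enorm (Phi xp - xn).
Proof.
move=> lPhi yn_eps.
have -> : yn - xn = (yn - Phi yp) + (Phi yp - Phi xp) + (Phi xp - xn).
  by rewrite !addrA subrK subrK.
apply: le_trans (enormD _ _) _; rewrite lerD2r.
by apply: le_trans (enormD _ _) _; apply: lerD.
Qed.

End SwitchedFlow.

Section SwitchedGridError.
Context {R : realType} {d : nat}.
Variables (f1 f2 : vec R d -> vec R d) (L1 L2 mu eps T1 T2 Delta : R) (J m : nat).
Variables (x : R -> vec R d) (Phi1 Phi2 : vec R d -> vec R d) (yhat : nat -> vec R d).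
Hypotheses (L1_gt0 : 0 < L1) (L2_gt0 : 0 < L2).
Hypotheses (lf1 : lipschitz_with f1 L1) (lf2 : lipschitz_with f2 L2).
Hypotheses (mu_gt0 : 0 < mu) (f1f2 : forall z, enorm (f1 z - f2 z) <= mu).
Hypotheses (Delta_gt0 : 0 < Delta) (tgridJ : tgrid Delta J = T2) (mJ : (1 <= m <= J)%N).
Let tb := tgrid Delta m.
Hypotheses (T1_gt0 : 0 < T1) (T1_le_tb : T1 <= tb).
Hypotheses (sx1 : solves_on f1 0 T1 x) (sx2 : solves_on f2 T1 T2 x).
Hypotheses (fl1 : is_flow_map f1 Delta Phi1) (fl2 : is_flow_map f2 Delta Phi2).
Hypotheses (yhat1 : yhat 1%N = x 0) (eps_ge0 : 0 <= eps).
Hypothesis step_acc : forall j, (2 <= j <= J)%N ->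
  enorm (yhat j - (if tgrid Delta j <= tb then Phi1 else Phi2) (yhat j.-1)) <= eps.

Let err k := enorm (yhat k - x (tgrid Delta k)).

Lemma err_step_phase1 k : (1 <= k < m)%N ->
  err k.+1 <= expR (L1 * Delta) * err k +
    (eps + mu / L1 * (expR (L1 * (past_switch T1 (tgrid Delta k.+1)
                                  - past_switch T1 (tgrid Delta k))) - 1)).
Proof.
move=> /andP[k1 km].
have k2J : (2 <= k.+1 <= J)%N by apply/andP; split; lia.
have := step_acc _ k2J; rewrite ler_tgrid_nat // => acc.
apply: le_trans (one_step_error_le (x (tgrid Delta k)) _
  (flow_map_lipschitz L1_gt0 (ltW Delta_gt0) lf1 fl1) acc) _.
rewrite [eps + _]addrC -addrA !lerD2l tgridS //.
apply: (switched_flow_defect_le L1_gt0 (ltW Delta_gt0)) lf1 f1f2 sx1 sx2 fl1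
  (tgrid_ge0 Delta_gt0 _) _.
by rewrite -tgridS // -tgridJ ler_tgrid_nat //; lia.
Qed.

Lemma err_step_phase2 k : (m <= k < J)%N ->
  err k.+1 <= expR (L2 * Delta) * err k + eps.
Proof.
move=> /andP[mk kJ].
have m0 : (0 < m)%N by case/andP: mJ.
have k0 : (0 < k)%N by lia.
have k2J : (2 <= k.+1 <= J)%N by apply/andP; split; lia.
have := step_acc _ k2J; rewrite /tb ler_tgrid // leqNgt ltnS mk /= => acc.
apply: le_trans (one_step_error_le (x (tgrid Delta k)) _
  (flow_map_lipschitz L2_gt0 (ltW Delta_gt0) lf2 fl2) acc) _.
have T1k : T1 <= tgrid Delta k by rewrite (le_trans T1_le_tb) ?ler_tgrid_nat.
have kT2 : tgrid Delta k + Delta <= T2 by rewrite -tgridS // -tgridJ ler_tgrid_nat.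
rewrite tgridS // (flow_map_on_solution L2_gt0 (ltW Delta_gt0) lf2 fl2 sx2 T1k kT2).
by rewrite subrr enorm0 addr0 addrC.
Qed.

Lemma err_phase1 k : (1 <= k <= m)%N ->
  err k <= mu / L1 * (expR (L1 * past_switch T1 (tgrid Delta k)) - 1)
           + accum L1 Delta (tgrid Delta k) * eps.
Proof.
move: k; apply: (le_by_recursion (ltW (expR_gt0 _)) _ err_step_phase1).
  rewrite /err yhat1 tgrid1 subrr enorm0 (past_switch_le (ltW T1_gt0)).
  by rewrite mulr0 expR0 subrr mulr0 accum0 mul0r addr0 lexx.
move=> k /andP[k0 _]; rewrite tgridS // -(accumD _ L1_gt0 Delta_gt0).
rewrite -(expR_past_switchD L1 T1 _ _ (ltW Delta_gt0)).
by rewrite le_eqVlt; apply/orP; left; apply/eqP; ring.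
Qed.

Lemma err_phase2 k : (m <= k <= J)%N ->
  err k <= expR (L2 * (tgrid Delta k - tb)) * err m
           + accum L2 Delta (tgrid Delta k - tb) * eps.
Proof.
move: k; apply: (le_by_recursion (ltW (expR_gt0 _)) _ err_step_phase2).
  by rewrite subrr mulr0 expR0 mul1r accum0 mul0r addr0 lexx.
move=> k /andP[mk _]; rewrite tgridS; last by case/andP: mJ; lia.
rewrite (_ : tgrid Delta k + Delta - tb = tgrid Delta k - tb + Delta); last by ring.
rewrite -(accumD _ L2_gt0 Delta_gt0) [L2 * (_ + Delta)]mulrDr expRD.
by rewrite le_eqVlt; apply/orP; left; apply/eqP; ring.
Qed.

Lemma err_before_switch j : (2 <= j <= J)%N -> tgrid Delta j <= T1 ->
  err j <= accum L1 Delta (tgrid Delta j) * eps.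
Proof.
move=> /andP[j2 jJ] jT1.
have m0 : (0 < m)%N by case/andP: mJ.
have jm : (j <= m)%N.
  by rewrite -(ler_tgrid Delta_gt0) //; [exact: le_trans jT1 T1_le_tb | lia].
have := err_phase1 j (ltac:(apply/andP; split; lia)).
by rewrite past_switch_le // mulr0 expR0 subrr mulr0 add0r.
Qed.

Lemma err_before_tb j : (2 <= j <= J)%N -> T1 < tgrid Delta j <= tb ->
  err j <= mu * (tgrid Delta j - T1) * expR (Num.max L1 L2 * (tgrid Delta j - T1))
           + accum L1 Delta (tgrid Delta j) * eps.
Proof.
move=> /andP[j2 jJ] /andP[T1j jtb].
have m0 : (0 < m)%N by case/andP: mJ.
have jm : (j <= m)%N by rewrite -(ler_tgrid Delta_gt0) //; lia.
have := err_phase1 j (ltac:(apply/andP; split; lia)).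
rewrite past_switch_ge ?(ltW T1j) // => /le_trans; apply; rewrite lerD2r.
apply: expR_drift_le => //; first by rewrite le_max lexx.
- exact: ltW.
- by rewrite subr_ge0 ltW.
Qed.

Lemma err_after_tb eta j : (2 <= j <= J)%N -> tb < tgrid Delta j -> tb - T1 <= eta ->
  err j <= mu * eta * expR (L2 * (tgrid Delta j - tb) + Num.max L1 L2 * eta)
           + accum L2 Delta (tgrid Delta j - tb) * eps
           + expR (L2 * (tgrid Delta j - tb)) * (accum L1 Delta tb * eps).
Proof.
move=> /andP[j2 jJ] tbj tb_eta.
have m0 : (0 < m)%N by case/andP: mJ.
have mj : (m <= j)%N.
  by rewrite -(ler_tgrid Delta_gt0) //; [exact: ltW | lia].
have := err_phase1 m (ltac:(apply/andP; split; lia)).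
rewrite past_switch_ge // => err_m.
have L1max : L1 <= Num.max L1 L2 by rewrite le_max lexx.
have drift : mu / L1 * (expR (L1 * (tb - T1)) - 1) <= mu * eta * expR (Num.max L1 L2 * eta).
  have tbT1 : 0 <= tb - T1 by rewrite subr_ge0.
  apply: le_trans (expR_drift_le L1_gt0 L1max (ltW mu_gt0) tbT1) _.
  rewrite -!mulrA ler_pM2l //; apply: ler_pM => //.
  rewrite ler_expR; apply: ler_wpM2l => //; exact: le_trans (ltW L1_gt0) L1max.
set E := expR (L2 * (tgrid Delta j - tb)).
have E_err_m : E * err m <= E * (mu * eta * expR (Num.max L1 L2 * eta) + accum L1 Delta tb * eps).
  by rewrite ler_pM2l ?expR_gt0 // (le_trans err_m) // lerD2r.
have mjJ : (m <= j <= J)%N by rewrite mj jJ.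
apply: le_trans (err_phase2 j mjJ) _.
have -> : mu * eta * expR (L2 * (tgrid Delta j - tb) + Num.max L1 L2 * eta)
    + accum L2 Delta (tgrid Delta j - tb) * eps + E * (accum L1 Delta tb * eps)
    = accum L2 Delta (tgrid Delta j - tb) * eps
      + E * (mu * eta * expR (Num.max L1 L2 * eta) + accum L1 Delta tb * eps).
  by rewrite expRD -/E; ring.
by rewrite addrC lerD2l.
Qed.

Lemma switched_grid_error eta j : (2 <= j <= J)%N -> tb - T1 <= eta ->
  let tj := tgrid Delta j in
  (0 < tj <= T1 -> err j <= accum L1 Delta tj * eps) /\
  (T1 < tj <= tb ->
     err j <= mu * (tj - T1) * expR (Num.max L1 L2 * (tj - T1)) + accum L1 Delta tj * eps) /\
  (tb < tj <= T2 ->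
     err j <= mu * eta * expR (L2 * (tj - tb) + Num.max L1 L2 * eta)
              + accum L2 Delta (tj - tb) * eps + expR (L2 * (tj - tb)) * (accum L1 Delta tb * eps)).
Proof.
move=> jJ tb_eta tj; split; [|split].
- by case/andP=> _; exact: err_before_switch.
- exact: err_before_tb.
- by case/andP=> tbj _; exact: err_after_tb.
Qed.

End SwitchedGridError.

Theorem mainTheorem5 (R : realType) (d : nat)
  (f1 f2 : vec R d -> vec R d) (L1 L2 mu eta eps T1 T2 : R) (J m : nat)
  (x0 : vec R d) (x : R -> vec R d)
  (Phi1 Phi2 : vec R d -> vec R d)
  (N : nat -> vec R d -> vec R d) (yhat : nat -> vec R d) :
  0 < L1 -> 0 < L2 -> lipschitz_with f1 L1 -> lipschitz_with f2 L2 ->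
  0 < mu -> (forall z, enorm (f1 z - f2 z) <= mu) ->
  (2 <= J)%N -> 0 < T2 ->
  let Delta := T2 / (J.-1)%:R in
  let tb := tgrid Delta m in
  (1 <= m <= J)%N ->
  0 < T1 -> T1 <= tb -> tb < T2 -> 0 < eta -> `|tb - T1| <= eta ->
  switched_solution f1 f2 T1 T2 x0 x ->
  is_flow_map f1 Delta Phi1 -> is_flow_map f2 Delta Phi2 ->
  yhat 1%N = x0 ->
  (forall j, (2 <= j <= J)%N -> yhat j = N j (yhat j.-1)) ->
  0 <= eps ->
  (forall j, (2 <= j <= J)%N ->
     enorm (N j (yhat j.-1) -
            (if tgrid Delta j <= tb then Phi1 else Phi2) (yhat j.-1)) <= eps) ->
  forall j, (2 <= j <= J)%N ->
    let tj := tgrid Delta j in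
    let err := enorm (yhat j - x tj) in
    (0 < tj <= T1 ->
       err <= (1 - expR (L1 * tj)) / (1 - expR (L1 * Delta)) * eps) /\
    (T1 < tj <= tb ->
       err <= mu * (tj - T1) * expR (Num.max L1 L2 * (tj - T1))
              + (1 - expR (L1 * tj)) / (1 - expR (L1 * Delta)) * eps) /\
    (tb < tj <= T2 ->
       err <= mu * eta * expR (L2 * (tj - tb) + Num.max L1 L2 * eta)
              + (1 - expR (L2 * (tj - tb))) / (1 - expR (L2 * Delta)) * eps
              + expR (L2 * (tj - tb)) * ((1 - expR (L1 * tb)) / (1 - expR (L1 * Delta)) * eps)).
Proof.
move=> L1_gt0 L2_gt0 lf1 lf2 mu_gt0 f1f2 J2 T2_gt0 Delta tb mJ T1_gt0 T1_le_tb _ _ tb_eta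
  [x0E [_ [sx1 sx2]]] fl1 fl2 yhat1 yhat_rec eps_ge0 N_acc j jJ tj err.
have J1_gt0 : 0 < (J.-1)%:R :> R by rewrite ltr0n; lia.
have Delta_gt0 : 0 < Delta by rewrite divr_gt0.
have tgridJ : tgrid Delta J = T2 by rewrite /tgrid /Delta mulrC divfK ?gt_eqF.
have yhat1_x0 : yhat 1%N = x 0 by rewrite yhat1 x0E.
have step_acc k : (2 <= k <= J)%N ->
    enorm (yhat k - (if tgrid Delta k <= tb then Phi1 else Phi2) (yhat k.-1)) <= eps.
  by move=> kJ; rewrite yhat_rec //; exact: N_acc.
have tb_T1_eta : tb - T1 <= eta by move: tb_eta; rewrite ger0_norm // subr_ge0.
by apply: (@switched_grid_error R d f1 f2 L1 L2 mu eps T1 T2 Delta J m x Phi1 Phi2 yhat).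
Qed.
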